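(* Let $\mathfrak g=\mathfrak k\oplus\mathfrak m$ be a Pauli-spanned Cartan decomposition and let $b_1,\dots,b_d\in\tilde{\mathfrak m}$ be pairwise commuting Pauli strings. Let $i\neq j$ be indices and $R=\{r_1,r_2,\dots\}$ a list of indices disjoint from $\{i,j\}$. If $\tilde{\mathfrak k}^{ij}_{r_1r_2\dots}$ is non-empty, then $|\tilde{\mathfrak k}^i_{jr_1r_2\dots}|=|\tilde{\mathfrak k}^j_{ir_1r_2\dots}|$.
   Context: Pauli strings on $n$ qubits are tensor products of $I,X,Y,Z$, not all identity; two Pauli strings either commute or anticommute. A Pauli-spanned Cartan decomposition is $\mathfrak g=\mathfrak k\oplus\mathfrak m\subseteq\mathfrak{su}(2^n)$ with $\mathfrak k=\mathrm{span}_{i\mathbb R}\tilde{\mathfrak k}$, $\mathfrak m=\mathrm{span}_{i\mathbb R}\tilde{\mathfrak m}$, where $\tilde{\mathfrak k}\sqcup\tilde{\mathfrak m}$ is the set of all Pauli strings (up to phase) $\sigma$ with $i\sigma\in\mathfrak g$, and $[\mathfrak k,\mathfrak k]\subseteq\mathfrak k$, $[\mathfrak m,\mathfrak m]\subseteq\mathfrak k$, $[\mathfrak k,\mathfrak m]\subseteq\mathfrak m$. For disjoint index lists, $\tilde{\mathfrak k}^{i_1i_2\dots}_{j_1j_2\dots}$ is the set of $k\in\tilde{\mathfrak k}$ anticommuting with every $b_{i_p}$ and commuting with every $b_{j_q}$ (no condition on other indices). *)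

(* Pauli strings up to phase on n qubits, in the standard
   binary-symplectic encoding: each tensor factor is a pair (x-bit, z-bit)
   with I = (false,false), X = (true,false), Z = (false,true), Y = (true,true).
   Multiplication of Pauli strings up to phase is componentwise xor. *)
From mathcomp Require Import all_boot.
Set Implicit Arguments. Unset Strict Implicit. Unset Printing Implicit Defensive.

Definition pauli1 := (bool * bool)%type.
Definition pI : pauli1 := (false, false).
Definition pX : pauli1 := (true, false).
Definition pZ : pauli1 := (false, true).
Definition pY : pauli1 := (true, true).

Definition pstring (n : nat) := {ffun 'I_n -> pauli1}.

Definition nonid n (s : pstring n) : bool := [exists q, s q != pI].

Definition anti1 (a b : pauli1) : bool := [&& a != pI, b != pI & a != b].

Definition panticommute n (s t : pstring n) : bool :=
  odd #|[set q | anti1 (s q) (t q)]|.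
Definition pcommute n (s t : pstring n) : bool := ~~ panticommute s t.

Definition pmul1 (a b : pauli1) : pauli1 := (xorb a.1 b.1, xorb a.2 b.2).
Definition pmul n (s t : pstring n) : pstring n := [ffun q => pmul1 (s q) (t q)].

(* Pauli-spanned Cartan decomposition g = k (+) m, given by the disjoint sets
   kt, mt of Pauli strings (up to phase).  For Pauli strings, [i s, i t] = 0 if
   s,t pcommute and is a nonzero multiple of i (s t) otherwise; since Pauli
   strings are linearly independent, the bracket inclusions
   [k,k] <= k, [m,m] <= k, [k,m] <= m for the spans are equivalent to the
   closure conditions below. *)
Definition pauli_cartan n (kt mt : {set pstring n}) : Prop :=
  [/\ [disjoint kt & mt],
      (forall s, s \in kt -> nonid s) /\
      (forall s, s \in mt -> nonid s),
      (forall s t, s \in kt -> t \in kt -> panticommute s t -> pmul s t \in kt),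
      (forall s t, s \in mt -> t \in mt -> panticommute s t -> pmul s t \in kt) &
      (forall s t, s \in kt -> t \in mt -> panticommute s t -> pmul s t \in mt)].

(* ktilde^{A}_{C}: elements of kt anticommuting with every b_a (a in A) and
   commuting with every b_c (c in C) *)
Definition ksub n d (kt : {set pstring n}) (b : 'I_d -> pstring n)
  (A C : seq 'I_d) : {set pstring n} :=
  [set k in kt | all (fun a => panticommute k (b a)) A &&
                 all (fun c => pcommute k (b c)) C].

From mathcomp Require Import all_boot.
Set Implicit Arguments. Unset Strict Implicit. Unset Printing Implicit Defensive.

(* Anticommutation is a symplectic form over GF(2) on Pauli strings, and the
   Cartan relations say which of kt, mt contains the product of two
   anticommuting strings.  Fix k0 in kt anticommuting with b_i and b_j.  The
   map sending x to x k0 when x anticommutes with k0, and to k0 x b_i b_j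
   otherwise, is an involution; bilinearity of the form and the Cartan
   relations show that it maps ktilde^i_{jR} into ktilde^j_{iR}.  Exchanging
   i and j gives the reverse inequality of cardinalities. *)

Lemma odd_card_xor (T : finType) (f g : pred T) :
  odd #|[set q | f q (+) g q]| = odd #|[set q | f q]| (+) odd #|[set q | g q]|.
Proof.
set X := [set q | f q (+) g q]; set A := [set q | f q]; set B := [set q | g q].
have XIA : X :&: A = A :\: B.
  by apply/setP => q; rewrite !inE; case: (f q); case: (g q).
have XDA : X :\: A = B :\: A.
  by apply/setP => q; rewrite !inE; case: (f q); case: (g q).
rewrite -(cardsID A X) -(cardsID B A) -(cardsID A B) XIA XDA (setIC A) !oddD.
by case: (odd #|B :&: A|); case: (odd #|A :\: B|); case: (odd #|B :\: A|).
Qed.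

Lemma anti1_mull a b c : anti1 (pmul1 a b) c = anti1 a c (+) anti1 b c.
Proof. by case: a => [[] []]; case: b => [[] []]; case: c => [[] []]. Qed.

Lemma anti1C a b : anti1 a b = anti1 b a.
Proof. by case: a => [[] []]; case: b => [[] []]. Qed.

Lemma anti1xx a : anti1 a a = false.
Proof. by case: a => [[] []]. Qed.

Section PauliAnticommutation.
Variable n : nat.
Implicit Types s t u : pstring n.

Lemma panticommuteC s t : panticommute s t = panticommute t s.
Proof. by congr odd; apply: eq_card => q; rewrite !inE anti1C. Qed.

Lemma panticommute_mull s t u :
  panticommute (pmul s t) u = panticommute s u (+) panticommute t u.
Proof.
rewrite /panticommute -odd_card_xor; congr odd; apply: eq_card => q.
by rewrite !inE ffunE anti1_mull.
Qed.

Lemma panticommute_mulr s t u :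
  panticommute u (pmul s t) = panticommute u s (+) panticommute u t.
Proof. by rewrite panticommuteC panticommute_mull !(panticommuteC u). Qed.

Lemma panticommutexx s : panticommute s s = false.
Proof.
rewrite /panticommute (_ : [set q | _] = set0) ?cards0 //.
by apply/setP => q; rewrite !inE anti1xx.
Qed.

End PauliAnticommutation.

Section CommutingFamily.
Variables (n d : nat) (b : 'I_d -> pstring n).
Hypothesis b_comm : forall p q, pcommute (b p) (b q).

Lemma b_antiF p q : panticommute (b p) (b q) = false.
Proof. exact: negbTE (b_comm p q). Qed.

Lemma all_pcommute_mul (C : seq 'I_d) (s t : pstring n) :
  all (fun c => pcommute s (b c)) C -> all (fun c => pcommute t (b c)) C ->
  all (fun c => pcommute (pmul s t) (b c)) C.
Proof.
move=> /allP sC /allP tC; apply/allP => c cC.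
by rewrite /pcommute panticommute_mull (negbTE (sC c cC)) (negbTE (tC c cC)).
Qed.

Lemma all_pcommute_b (C : seq 'I_d) p : all (fun c => pcommute (b p) (b c)) C.
Proof. by apply/allP => c _; apply: b_comm. Qed.

Variables (kt mt : {set pstring n}).
Hypothesis cartan : pauli_cartan kt mt.
Hypothesis b_in_m : forall p, b p \in mt.

Variables (k0 : pstring n) (i j : 'I_d).
Hypotheses (k0_in_k : k0 \in kt)
  (k0_anti_i : panticommute k0 (b i)) (k0_anti_j : panticommute k0 (b j)).

Definition cartan_flip (x : pstring n) : pstring n :=
  if panticommute x k0 then pmul x k0 else pmul (pmul k0 (pmul x (b i))) (b j).

Lemma cartan_flipK : involutive cartan_flip.
Proof.
move=> x; rewrite /cartan_flip.
case xk0: (panticommute x k0); rewrite !panticommute_mull panticommutexx xk0.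
  by apply/ffunP => q; rewrite !ffunE /=;
    case: (x q) => [[] []]; case: (k0 q) => [[] []].
rewrite -!(panticommuteC k0) k0_anti_i k0_anti_j /=.
by apply/ffunP => q; rewrite !ffunE /=;
  case: (x q) => [[] []]; case: (k0 q) => [[] []];
  case: (b i q) => [[] []]; case: (b j q) => [[] []].
Qed.

Lemma cartan_flip_ksub (R : seq 'I_d) x :
  all (fun c => pcommute k0 (b c)) R ->
  x \in ksub kt b [:: i] (j :: R) -> cartan_flip x \in ksub kt b [:: j] (i :: R).
Proof.
case: cartan => _ _ kk_k mm_k km_m.
move=> k0R; rewrite !inE /= !andbT => /and4P [xk xi xj xR].
rewrite /cartan_flip; case xk0: (panticommute x k0); rewrite {1}/pcommute.
  rewrite !panticommute_mull xi k0_anti_i (negbTE xj) k0_anti_j kk_k //=.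
  by apply: all_pcommute_mul.
have xbi_m : pmul x (b i) \in mt by apply: km_m.
have k0xbi_m : pmul k0 (pmul x (b i)) \in mt.
  by apply: km_m; rewrite // panticommute_mulr (panticommuteC k0) xk0 k0_anti_i.
rewrite mm_k //; last by rewrite !panticommute_mull k0_anti_j (negbTE xj) b_antiF.
rewrite !panticommute_mull xi k0_anti_i (negbTE xj) k0_anti_j !b_antiF /=.
by rewrite !all_pcommute_mul ?all_pcommute_b.
Qed.

Lemma card_ksub_flip_le (R : seq 'I_d) :
  all (fun c => pcommute k0 (b c)) R ->
  #|ksub kt b [:: i] (j :: R)| <= #|ksub kt b [:: j] (i :: R)|.
Proof.
move=> k0R; rewrite -(card_imset _ (can_inj cartan_flipK)).
apply/subset_leq_card/subsetP => _ /imsetP [x xA ->].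
exact: cartan_flip_ksub.
Qed.

End CommutingFamily.

Theorem corollaryC3 (n d : nat) (kt mt : {set pstring n})
  (b : 'I_d -> pstring n) (i j : 'I_d) (R : seq 'I_d) :
  pauli_cartan kt mt ->
  (forall p, b p \in mt) ->
  (forall p q, pcommute (b p) (b q)) ->
  i != j -> i \notin R -> j \notin R ->
  ksub kt b [:: i; j] R != set0 ->
  #|ksub kt b [:: i] (j :: R)| = #|ksub kt b [:: j] (i :: R)|.
Proof.
(* The index conditions on i, j and R are not needed. *)
move=> cartan b_in_m b_comm _ _ _ /set0Pn [k0].
rewrite inE /= !andbT => /and3P [k0_in_k /andP [k0_anti_i k0_anti_j] k0R].
have flip_le := card_ksub_flip_le b_comm cartan b_in_m k0_in_k.
by apply/eqP; rewrite eqn_leq !flip_le.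
Qed.
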